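(* Fix $b>0$, $c>0$, $\theta>0$ with $\theta<c\le2\theta$ and $b\ge c^2/2$, and let $a>0$ vary with $\zeta(a):=\frac{b^2-a(c-\theta)}{a^2}<0$ (the mixed-equilibrium region). Define $$\bar a_M=\frac{\Bigl(b+c^2-3c\theta+2\theta^2+\sqrt{b\,(b-2c\theta+2\theta^2)}\Bigr)b^2}{(c-\theta)^3}.$$ Then $\bar a_M\ge\frac{2b^2}{c-\theta}$, and for every $a\le\bar a_M$ in the mixed-equilibrium region the truncated contest admits an on-domain mixed equilibrium; one such equilibrium is given by both players using the following two-point distribution: if $a\le\frac{2b^2}{c-\theta}$, probability $\tfrac12$ on each of $\kappa-s$ and $\kappa+s$ where $\kappa=b/a$, $s=\sqrt{-\zeta}$; if $a\ge\frac{2b^2}{c-\theta}$, probability $1-p$ on $0$ and $p$ on $z$, where $z=\frac{c-\theta}{b}$, $p=\frac{b^2}{a(c-\theta)}$. In particular, the set of $a$ for which an on-domain mixed equilibrium exists is nonempty.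
   Context: Let $P(x,y)=\tfrac12+(x-y)\bigl(c-b(x+y)+axy\bigr)$ and $\bar P=\min\{1,\max\{0,P\}\}$. The truncated contest is the two-player complete-information game with efforts $x,y\ge0$ and payoffs $\bar P(x,y)-\theta x$ for $X$ and $1-\bar P(x,y)-\theta y$ for $Y$, mixed strategies allowed. An equilibrium is on-domain if $0\le P(x,y)\le1$ (so $\bar P=P$) for all pairs $(x,y)$ in the product of the supports of the equilibrium strategies. A mixed equilibrium is one in which some player uses a nondegenerate distribution. *)

From Stdlib Require Import Reals Lra List.
Import ListNotations.
Open Scope R_scope.

Definition Pc (a b c x y : R) : R :=
  1/2 + (x - y) * (c - b * (x + y) + a * x * y).

Definition Pbar (a b c x y : R) : R := Rmin 1 (Rmax 0 (Pc a b c x y)).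

(* A (finitely supported) mixed strategy: list of (effort, probability). *)
Definition dist := list (R * R).

Definition total_prob (d : dist) : R :=
  fold_right (fun xp acc => snd xp + acc) 0 d.

Definition valid_dist (d : dist) : Prop :=
  (forall xp, In xp d -> 0 <= fst xp /\ 0 <= snd xp) /\ total_prob d = 1.

Definition expect2 (f : R -> R -> R) (dX dY : dist) : R :=
  fold_right (fun xp acc =>
    fold_right (fun yq acc' => snd xp * snd yq * f (fst xp) (fst yq) + acc') 0 dY
    + acc) 0 dX.

Definition payX (a b c th : R) (dX dY : dist) : R :=
  expect2 (fun x y => Pbar a b c x y - th * x) dX dY.
Definition payY (a b c th : R) (dX dY : dist) : R :=
  expect2 (fun x y => 1 - Pbar a b c x y - th * y) dX dY.

Definition is_equilibrium (a b c th : R) (dX dY : dist) : Prop :=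
  valid_dist dX /\ valid_dist dY /\
  (forall d, valid_dist d -> payX a b c th d dY <= payX a b c th dX dY) /\
  (forall d, valid_dist d -> payY a b c th dX d <= payY a b c th dX dY).

Definition in_support (d : dist) (x : R) : Prop :=
  exists p, In (x, p) d /\ 0 < p.

Definition on_domain (a b c : R) (dX dY : dist) : Prop :=
  forall x y, in_support dX x -> in_support dY y ->
    0 <= Pc a b c x y <= 1.

Definition degenerate (d : dist) : Prop :=
  exists x0, forall x, in_support d x -> x = x0.

Definition mixed_profile (dX dY : dist) : Prop :=
  ~ degenerate dX \/ ~ degenerate dY.

Definition zeta (a b c th : R) : R := (b ^ 2 - a * (c - th)) / a ^ 2.

Definition abarM (b c th : R) : R :=
  (b + c ^ 2 - 3 * c * th + 2 * th ^ 2 + sqrt (b * (b - 2 * c * th + 2 * th ^ 2)))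
  * b ^ 2 / (c - th) ^ 3.

Definition sym_dist (a b c th : R) : dist :=
  let kappa := b / a in let s := sqrt (- zeta a b c th) in
  [(kappa - s, 1/2); (kappa + s, 1/2)].

Definition zero_dist (a b c th : R) : dist :=
  let z := (c - th) / b in let p := b ^ 2 / (a * (c - th)) in
  [(0, 1 - p); (z, p)].

(* Both candidate strategies are two-point distributions with mean m and second
   moment M satisfying b = a m and c - th = a M.  Against such a distribution the
   expected untruncated win probability of an effort x is 1/2 + th (x - m), so the
   untruncated payoff 1/2 - th m does not depend on x.  Truncation to [0,1] only
   lowers payoffs, except at efforts x with P(x, y) < 0 for a support point y, and
   for both distributions those deviations are checked to be unprofitable.  For the
   distribution on {0, z} this is the bound (z - x)(th + K x) <= 1/2 for a concave
   quadratic in x; when its maximum is interior, the bound is equivalent to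
   a <= abarM. *)

From Stdlib Require Import Reals Lra Psatz List.
Import ListNotations.
Open Scope R_scope.

Lemma Rle_div_iff x y e : 0 < e -> x <= y / e <-> x * e <= y.
Proof.
  intros he. replace y with (y / e * e) at 2 by (field; lra).
  split; intro H; [apply Rmult_le_compat_r|apply Rmult_le_reg_r with e]; lra.
Qed.

Lemma Rdiv_le_iff x y e : 0 < e -> y / e <= x <-> y <= x * e.
Proof.
  intros he. replace y with (y / e * e) at 2 by (field; lra).
  split; intro H; [apply Rmult_le_compat_r|apply Rmult_le_reg_r with e]; lra.
Qed.

Lemma gap_mul_le b c th : c ^ 2 <= 2 * b -> 2 * (c - th) * th <= b.
Proof. intros H. pose proof (pow2_ge_0 (c - 2 * th)). nra. Qed.

Lemma affine_product_le z th K M x :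
  0 < th -> 0 <= K -> 0 <= x -> z * th <= M ->
  ((K * z + th) ^ 2 <= 4 * K * M \/ K * z <= th) ->
  (z - x) * (th + K * x) <= M.
Proof.
  intros hth hK hx Hedge [Hdisc|Hslope].
  - assert (hK' : 0 < K).
    { destruct hK as [|<-]; [assumption|].
      assert (0 < th ^ 2) by (apply pow_lt; lra). ring_simplify in Hdisc. lra. }
    assert (4 * K * ((z - x) * (th + K * x)) <= (K * z + th) ^ 2)
      by (pose proof (pow2_ge_0 (K * (z - x) - (th + K * x))); nra).
    apply Rmult_le_reg_l with (4 * K); lra.
  - replace ((z - x) * (th + K * x)) with (z * th - x * (th - K * z) - K * x ^ 2) by ring.
    assert (0 <= x * (th - K * z)) by (apply Rmult_le_pos; lra).
    assert (0 <= K * x ^ 2) by (apply Rmult_le_pos; [lra|apply pow2_ge_0]).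
    lra.
Qed.

(* (b - e th - S) / e and (b - e th + S) / e are the roots of e (t + th)^2 = 2 b t. *)
Lemma sq_le_of_le_upper_root b e th S t :
  0 < e -> 0 <= th -> 2 * e * th <= b -> 0 <= S -> S ^ 2 = b * (b - 2 * e * th) ->
  th <= t -> e * t <= b - e * th + S -> e * (t + th) ^ 2 <= 2 * b * t.
Proof.
  intros he hth Hgap hS HS ht Hup.
  assert (HSlow : b - 2 * e * th <= S).
  { destruct (Rle_or_lt (b - 2 * e * th) S) as [|Hlt]; [assumption|exfalso].
    assert (S * S < (b - 2 * e * th) * (b - 2 * e * th))
      by (apply Rmult_le_0_lt_compat; lra).
    assert (0 <= e * th) by (apply Rmult_le_pos; lra).
    nra. }
  assert (Hlow : b - e * th - S <= e * t) by nra.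
  assert (0 <= (e * t - (b - e * th - S)) * ((b - e * th + S) - e * t))
    by (apply Rmult_le_pos; lra).
  assert (E : (e * t - (b - e * th - S)) * ((b - e * th + S) - e * t)
              = S ^ 2 - (e * (t + th) - b) ^ 2) by ring.
  rewrite HS in E.
  apply Rmult_le_reg_l with e; [assumption|]. nra.
Qed.

Definition expect (d : dist) (F : R -> R) : R :=
  fold_right (fun xp acc => snd xp * F (fst xp) + acc) 0 d.

Lemma expect_ext d F G : (forall x, F x = G x) -> expect d F = expect d G.
Proof. intros H; induction d as [|[x p] d IH]; simpl; [reflexivity|]. now rewrite H, IH. Qed.

Lemma expect_scale_add d p F G :
  expect d (fun x => p * F x + G x) = p * expect d F + expect d G.
Proof. induction d as [|[x q] d IH]; simpl; [ring|]. rewrite IH; ring. Qed.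

Lemma expect2_iterated f dX dY :
  expect2 f dX dY = expect dX (fun x => expect dY (f x)).
Proof.
  induction dX as [|[x p] dX IH]; [reflexivity|].
  unfold expect2 in *; simpl. rewrite IH. f_equal. clear IH.
  induction dY as [|[y q] dY IHY]; simpl; [ring|]. rewrite IHY; ring.
Qed.

Lemma expect_comm f dX dY :
  expect dX (fun x => expect dY (f x)) = expect dY (fun y => expect dX (fun x => f x y)).
Proof.
  induction dX as [|[x p] dX IH]; simpl.
  - induction dY as [|[y q] dY IHY]; simpl; [reflexivity|]. rewrite <- IHY; ring.
  - rewrite IH. symmetry. apply expect_scale_add.
Qed.

Lemma expect_le d F V :
  valid_dist d -> (forall x, 0 <= x -> F x <= V) -> expect d F <= V.
Proof.
  intros [Hd Htot] HF.
  enough (expect d F <= V * total_prob d) by (rewrite Htot in *; lra).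
  clear Htot; induction d as [|[x p] d IH]; unfold total_prob in *; simpl in *; [lra|].
  destruct (Hd (x, p) (or_introl eq_refl)) as [hx hp]; simpl in hx, hp.
  assert (p * F x <= p * V) by (apply Rmult_le_compat_l; auto).
  assert (expect d F <= V * total_prob d) by (apply IH; auto).
  unfold total_prob in *; lra.
Qed.

Lemma expect_two_point x1 p1 x2 p2 F :
  expect [(x1, p1); (x2, p2)] F = p1 * F x1 + p2 * F x2.
Proof. simpl; ring. Qed.

Definition clamp01 (t : R) : R := Rmin 1 (Rmax 0 t).

Lemma Pbar_clamp01 a b c x y : Pbar a b c x y = clamp01 (Pc a b c x y).
Proof. reflexivity. Qed.

Lemma clamp01_id t : 0 <= t <= 1 -> clamp01 t = t.
Proof. unfold clamp01, Rmin, Rmax; repeat destruct Rle_dec; lra. Qed.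

Lemma clamp01_compl t : clamp01 (1 - t) = 1 - clamp01 t.
Proof. unfold clamp01, Rmin, Rmax; repeat destruct Rle_dec; lra. Qed.

Lemma clamp01_average_le q1 q2 t1 t2 :
  0 <= q1 -> 0 <= q2 ->
  (t1 < 0 -> q2 <= q1 * t1 + q2 * t2) -> (t2 < 0 -> q1 <= q1 * t1 + q2 * t2) ->
  q1 * clamp01 t1 + q2 * clamp01 t2 <= q1 * t1 + q2 * t2.
Proof.
  intros hq1 hq2 H1 H2.
  unfold clamp01, Rmin, Rmax; repeat destruct Rle_dec; nra.
Qed.

Lemma Pc_swap a b c x y : Pc a b c y x = 1 - Pc a b c x y.
Proof. unfold Pc; field. Qed.

Lemma Pc_diag a b c x : Pc a b c x x = 1/2.
Proof. unfold Pc; field. Qed.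

Lemma Pbar_swap a b c x y : Pbar a b c y x = 1 - Pbar a b c x y.
Proof. rewrite !Pbar_clamp01, Pc_swap. apply clamp01_compl. Qed.

Lemma Pc_at_zero_nonneg a b c y : 0 < b -> c ^ 2 <= 2 * b -> 0 <= Pc a b c 0 y.
Proof.
  intros hb hc.
  assert (E : 4 * b * Pc a b c 0 y = (2 * b * y - c) ^ 2 + (2 * b - c ^ 2))
    by (unfold Pc; field).
  assert (0 <= (2 * b * y - c) ^ 2) by apply pow2_ge_0.
  nra.
Qed.

Definition pure_payX (a b c th : R) (dY : dist) (x : R) : R :=
  expect dY (fun y => Pbar a b c x y - th * x).

Lemma payX_expect a b c th dX dY :
  payX a b c th dX dY = expect dX (pure_payX a b c th dY).
Proof. apply expect2_iterated. Qed.

Lemma payY_expect a b c th dX dY :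
  payY a b c th dX dY = expect dY (pure_payX a b c th dX).
Proof.
  unfold payY; rewrite expect2_iterated, expect_comm.
  apply expect_ext; intro y; apply expect_ext; intro x.
  rewrite Pbar_swap; ring.
Qed.

Lemma symmetric_equilibrium_of_pure a b c th d V :
  valid_dist d -> (forall x, 0 <= x -> pure_payX a b c th d x <= V) ->
  expect d (pure_payX a b c th d) = V -> is_equilibrium a b c th d d.
Proof.
  intros Hd Hle Heq. split; [exact Hd|split; [exact Hd|split]]; intros d' Hd'.
  - rewrite !payX_expect, Heq. now apply expect_le.
  - rewrite !payY_expect, Heq. now apply expect_le.
Qed.

Definition symmetric_mixed_equilibrium (a b c th : R) (d : dist) : Prop :=
  is_equilibrium a b c th d d /\ on_domain a b c d d /\ mixed_profile d d.

Section TwoPointEquilibrium.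

Variables a b c th y1 y2 q1 q2 : R.
Hypotheses (hy1 : 0 <= y1) (hy2 : 0 <= y2) (hq1 : 0 < q1) (hq2 : 0 < q2)
  (hq : q1 + q2 = 1).
Hypotheses (Hmean : b = a * (q1 * y1 + q2 * y2))
  (Hmoment : c - th = a * (q1 * y1 ^ 2 + q2 * y2 ^ 2)).

Lemma two_point_average_Pc x :
  q1 * Pc a b c x y1 + q2 * Pc a b c x y2 = 1/2 + th * (x - (q1 * y1 + q2 * y2)).
Proof.
  replace c with (th + a * (q1 * y1 ^ 2 + q2 * y2 ^ 2)) by lra.
  rewrite Hmean; unfold Pc. replace q2 with (1 - q1) by lra. field.
Qed.

Hypotheses (Hcross : 0 <= Pc a b c y1 y2 <= 1)
  (Hdev1 : forall x, 0 <= x -> Pc a b c x y1 < 0 ->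
     q2 <= 1/2 + th * (x - (q1 * y1 + q2 * y2)))
  (Hdev2 : forall x, 0 <= x -> Pc a b c x y2 < 0 ->
     q1 <= 1/2 + th * (x - (q1 * y1 + q2 * y2))).

Let d := [(y1, q1); (y2, q2)].

Lemma two_point_support x : in_support d x -> x = y1 \/ x = y2.
Proof. intros [p [[E|[E|[]]] _]]; injection E; auto. Qed.

Lemma two_point_in_support x : x = y1 \/ x = y2 -> in_support d x.
Proof. intros [->| ->]; [exists q1|exists q2]; simpl; auto. Qed.

Lemma two_point_on_domain : on_domain a b c d d.
Proof.
  intros x y Hx Hy.
  destruct (two_point_support x Hx) as [->| ->], (two_point_support y Hy) as [->| ->];
    rewrite ?Pc_diag, ?(Pc_swap a b c y1 y2); lra.
Qed.

Lemma two_point_pure_payX_le x :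
  0 <= x -> pure_payX a b c th d x <= 1/2 - th * (q1 * y1 + q2 * y2).
Proof.
  intros hx. unfold pure_payX, d; rewrite expect_two_point. rewrite !Pbar_clamp01.
  pose proof (two_point_average_Pc x) as Havg.
  assert (q1 * clamp01 (Pc a b c x y1) + q2 * clamp01 (Pc a b c x y2)
          <= q1 * Pc a b c x y1 + q2 * Pc a b c x y2).
  { apply clamp01_average_le; try lra; rewrite Havg; auto. }
  nra.
Qed.

Lemma two_point_pure_payX_support :
  expect d (pure_payX a b c th d) = 1/2 - th * (q1 * y1 + q2 * y2).
Proof.
  assert (Hon := two_point_on_domain).
  assert (Hsupp : forall x, x = y1 \/ x = y2 ->
            pure_payX a b c th d x = 1/2 - th * (q1 * y1 + q2 * y2)).
  { intros x Hx. unfold pure_payX, d; rewrite expect_two_point.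
    rewrite !Pbar_clamp01, !clamp01_id by (apply Hon; apply two_point_in_support; auto).
    pose proof (two_point_average_Pc x). nra. }
  unfold d at 1; rewrite expect_two_point, !Hsupp by auto. nra.
Qed.

Lemma two_point_equilibrium :
  y1 <> y2 -> symmetric_mixed_equilibrium a b c th d.
Proof.
  intros hne. split; [|split].
  - apply symmetric_equilibrium_of_pure with (1/2 - th * (q1 * y1 + q2 * y2)).
    + split; [intros xp [<-|[<-|[]]]; simpl; lra|unfold total_prob; simpl; lra].
    + exact two_point_pure_payX_le.
    + exact two_point_pure_payX_support.
  - exact two_point_on_domain.
  - left. intros [x0 Hx0]. apply hne.
    rewrite (Hx0 y1), (Hx0 y2); auto; apply two_point_in_support; auto.
Qed.

End TwoPointEquilibrium.

Lemma sym_two_point_equilibrium a b c th k s :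
  0 < a -> 0 < th -> 0 < s -> s <= k -> b = a * k ->
  c - th = a * (k ^ 2 + s ^ 2) -> c - th <= th -> c ^ 2 <= 2 * b ->
  symmetric_mixed_equilibrium a b c th [(k - s, 1/2); (k + s, 1/2)].
Proof.
  intros ha hth hs hsk Hb He Hgap Hbc.
  assert (hb : 0 < b) by (subst b; nra).
  assert (Hmean : 1/2 * (k - s) + 1/2 * (k + s) = k) by field.
  apply (two_point_equilibrium a b c th (k - s) (k + s) (1/2) (1/2));
    rewrite ?Hmean; try lra.
  - assert (Hs : 2 * b * s <= c - th) by (subst b; rewrite He; pose proof (pow2_ge_0 (k - s)); nra).
    assert (E : Pc a b c (k - s) (k + s) = 1/2 - 2 * th * s)
      by (unfold Pc; replace c with (th + a * (k ^ 2 + s ^ 2)) by lra; subst b; field).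
    pose proof (gap_mul_le b c th Hbc).
    assert (4 * th * s <= 1) by nra.
    nra.
  - intros x hx HP. destruct (Rle_or_lt k x) as [hk|hk]; [nra|exfalso].
    assert (E : Pc a b c x (k - s) = Pc a b c 0 (k - s) + x * (th + a * s * (2 * k - x)))
      by (unfold Pc; replace c with (th + a * (k ^ 2 + s ^ 2)) by lra; subst b; field).
    pose proof (Pc_at_zero_nonneg a b c (k - s) hb Hbc).
    assert (0 <= a * s * (2 * k - x)) by (apply Rmult_le_pos; [apply Rmult_le_pos|]; lra).
    assert (0 <= x * (th + a * s * (2 * k - x))) by (apply Rmult_le_pos; lra).
    lra.
  - intros x hx HP. destruct (Rle_or_lt k x) as [hk|hk]; [nra|exfalso].
    assert (E : Pc a b c x (k + s) = Pc a b c 0 (k + s) + x * (th - 2 * a * k * s + a * s * x))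
      by (unfold Pc; replace c with (th + a * (k ^ 2 + s ^ 2)) by lra; subst b; field).
    pose proof (Pc_at_zero_nonneg a b c (k + s) hb Hbc).
    assert (2 * a * k * s <= th) by (pose proof (pow2_ge_0 (k - s)); nra).
    assert (0 <= x * (th - 2 * a * k * s + a * s * x)) by (apply Rmult_le_pos; nra).
    lra.
Qed.

Lemma zeta_neg_iff a b c th : 0 < a -> zeta a b c th < 0 <-> b ^ 2 < a * (c - th).
Proof.
  intros ha.
  assert (E : zeta a b c th * a ^ 2 = b ^ 2 - a * (c - th)) by (unfold zeta; field; lra).
  assert (0 < a ^ 2) by (apply pow_lt; lra).
  split; intro Hneg; nra.
Qed.

Lemma sym_dist_equilibrium a b c th :
  0 < a -> 0 < th -> th < c <= 2 * th -> c ^ 2 <= 2 * b ->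
  b ^ 2 < a * (c - th) -> a * (c - th) <= 2 * b ^ 2 ->
  symmetric_mixed_equilibrium a b c th (sym_dist a b c th).
Proof.
  intros ha hth hc Hbc Hlow Hup. unfold sym_dist; cbv zeta.
  assert (hb : 0 < b) by nra.
  set (k := b / a). set (s := sqrt (- zeta a b c th)).
  assert (hzeta : zeta a b c th < 0) by (apply zeta_neg_iff; auto).
  assert (Hs2 : s ^ 2 = (a * (c - th) - b ^ 2) / a ^ 2)
    by (unfold s; rewrite pow2_sqrt by lra; unfold zeta; field; lra).
  assert (hs : 0 < s) by (apply sqrt_lt_R0; lra).
  assert (Hk2 : k ^ 2 = b ^ 2 / a ^ 2) by (unfold k; field; lra).
  assert (hsk : s ^ 2 <= k ^ 2).
  { rewrite Hs2, Hk2. apply Rmult_le_compat_r; [|lra].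
    left; apply Rinv_0_lt_compat, pow_lt; lra. }
  apply sym_two_point_equilibrium; try lra.
  - assert (0 < k) by (apply Rdiv_lt_0_compat; lra). nra.
  - unfold k; field; lra.
  - rewrite Hs2, Hk2; field; lra.
Qed.

Lemma abarM_eq b c th :
  abarM b c th = (b + (c - th) ^ 2 - (c - th) * th + sqrt (b * (b - 2 * (c - th) * th)))
                 * b ^ 2 / (c - th) ^ 3.
Proof.
  unfold abarM.
  replace (b * (b - 2 * c * th + 2 * th ^ 2)) with (b * (b - 2 * (c - th) * th)) by ring.
  replace (b + c ^ 2 - 3 * c * th + 2 * th ^ 2) with (b + (c - th) ^ 2 - (c - th) * th) by ring.
  reflexivity.
Qed.

Lemma abarM_ge b c th :
  0 < b -> th < c <= 2 * th -> c ^ 2 <= 2 * b -> 2 * b ^ 2 / (c - th) <= abarM b c th.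
Proof.
  intros hb hc Hbc. pose proof (gap_mul_le b c th Hbc).
  rewrite abarM_eq. set (e := c - th) in *.
  assert (he : 0 < e) by (unfold e; lra).
  assert (e * e <= e * th) by (apply Rmult_le_compat_l; unfold e; lra).
  pose proof (sqrt_pos (b * (b - 2 * e * th))).
  assert (2 * e ^ 2 <= b + e ^ 2 - e * th + sqrt (b * (b - 2 * e * th))) by (simpl; lra).
  replace (2 * b ^ 2 / e) with (2 * e ^ 2 * b ^ 2 / e ^ 3) by (field; lra).
  unfold Rdiv. apply Rmult_le_compat_r; [left; apply Rinv_0_lt_compat, pow_lt; lra|].
  apply Rmult_le_compat_r; [apply pow2_ge_0|lra].
Qed.

Lemma zero_dist_Pc_nonneg a b c th x :
  0 < a -> 0 < b -> 0 < th -> th < c -> c ^ 2 <= 2 * b -> b ^ 2 <= a * (c - th) ->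
  a <= abarM b c th -> 0 <= x -> 0 <= Pc a b c x ((c - th) / b).
Proof.
  intros ha hb hth hc Hbc Hlow HaM hx.
  pose proof (gap_mul_le b c th Hbc) as Hgap.
  rewrite abarM_eq in HaM. set (e := c - th) in *.
  set (z := e / b). set (K := (a * e - b ^ 2) / b).
  assert (he : 0 < e) by (unfold e; lra).
  assert (hz : b * z = e) by (unfold z; field; lra).
  assert (hK : 0 <= K) by (unfold K; apply Rmult_le_pos; [lra|left; apply Rinv_0_lt_compat; lra]).
  assert (E : Pc a b c x z = 1/2 - (z - x) * (th + K * x)).
  { unfold Pc, K, z. replace c with (th + e) by (unfold e; ring). field. lra. }
  rewrite E.
  enough ((z - x) * (th + K * x) <= 1/2) by lra.
  apply affine_product_le; try lra.
  - nra.
  - destruct (Rle_or_lt (K * z) th) as [Hslope|Hslope]; [right; exact Hslope|left].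
    set (S := sqrt (b * (b - 2 * e * th))) in *.
    assert (HS : S ^ 2 = b * (b - 2 * e * th)) by (apply pow2_sqrt; nra).
    assert (Hup : e * (K * z) <= b - e * th + S).
    { apply Rle_div_iff in HaM; [|apply pow_lt; lra].
      apply Rmult_le_reg_r with (b ^ 2); [apply pow_lt; lra|].
      replace (e * (K * z) * b ^ 2) with (a * e ^ 3 - e ^ 2 * b ^ 2)
        by (unfold K, z; field; lra).
      lra. }
    pose proof (sq_le_of_le_upper_root b e th S (K * z) he ltac:(lra) Hgap
                  (sqrt_pos _) HS ltac:(lra) Hup).
    apply Rmult_le_reg_l with e; [lra|]. nra.
Qed.

Lemma zero_dist_equilibrium a b c th :
  0 < a -> 0 < b -> 0 < th -> th < c -> c ^ 2 <= 2 * b ->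
  2 * b ^ 2 <= a * (c - th) -> a <= abarM b c th ->
  symmetric_mixed_equilibrium a b c th (zero_dist a b c th).
Proof.
  intros ha hb hth hc Hbc Hup HaM. unfold zero_dist; cbv zeta.
  pose proof (gap_mul_le b c th Hbc) as Hgap.
  assert (hae : 0 < a * (c - th)) by (apply Rmult_lt_0_compat; lra).
  set (z := (c - th) / b). set (p := b ^ 2 / (a * (c - th))).
  assert (hz : b * z = c - th) by (unfold z; field; lra).
  assert (hzpos : 0 < z) by (unfold z; apply Rdiv_lt_0_compat; lra).
  assert (hp : a * (c - th) * p = b ^ 2) by (unfold p; field; lra).
  assert (hp0 : 0 < p) by (unfold p; apply Rdiv_lt_0_compat; [apply pow_lt|]; lra).
  assert (hp1 : p <= 1/2) by (apply Rmult_le_reg_l with (a * (c - th)); lra).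
  assert (Hmean : a * (p * z) = b) by (unfold p, z; field; lra).
  assert (Hmoment : a * (p * z ^ 2) = c - th) by (unfold p, z; field; lra).
  apply (two_point_equilibrium a b c th 0 z (1 - p) p); try lra.
  - assert (E : Pc a b c 0 z = 1/2 - z * th).
    { unfold Pc. replace (b * (0 + z)) with (c - th) by lra. ring. }
    assert (0 < z * th) by (apply Rmult_lt_0_compat; lra).
    assert (z * th <= 1/2) by nra.
    lra.
  - intros x hx HP. destruct (Rle_or_lt (p * z) x) as [hk|hk]; [nra|exfalso].
    assert (E : Pc a b c x 0 = 1/2 + x * (c - b * x)) by (unfold Pc; ring).
    assert (b * x <= (c - th) / 2) by nra.
    assert (0 <= x * (c - b * x)) by (apply Rmult_le_pos; lra).
    lra.
  - intros x hx HP. exfalso.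
    assert (0 <= Pc a b c x z) by (apply zero_dist_Pc_nonneg; lra).
    lra.
Qed.

Theorem proposition3 (b c th : R)
  (hb : 0 < b) (hc : 0 < c) (hth : 0 < th)
  (hc1 : th < c) (hc2 : c <= 2 * th) (hbc : b >= c ^ 2 / 2) :
  abarM b c th >= 2 * b ^ 2 / (c - th) /\
  (forall a : R, 0 < a -> zeta a b c th < 0 -> a <= abarM b c th ->
     (exists dX dY, is_equilibrium a b c th dX dY /\ on_domain a b c dX dY
                    /\ mixed_profile dX dY) /\
     (a <= 2 * b ^ 2 / (c - th) ->
        is_equilibrium a b c th (sym_dist a b c th) (sym_dist a b c th) /\
        on_domain a b c (sym_dist a b c th) (sym_dist a b c th) /\
        mixed_profile (sym_dist a b c th) (sym_dist a b c th)) /\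
     (a >= 2 * b ^ 2 / (c - th) ->
        is_equilibrium a b c th (zero_dist a b c th) (zero_dist a b c th) /\
        on_domain a b c (zero_dist a b c th) (zero_dist a b c th) /\
        mixed_profile (zero_dist a b c th) (zero_dist a b c th))) /\
  (exists a : R, 0 < a /\ zeta a b c th < 0 /\
     exists dX dY, is_equilibrium a b c th dX dY /\ on_domain a b c dX dY
                   /\ mixed_profile dX dY).
Proof.
  assert (Hbc : c ^ 2 <= 2 * b) by lra.
  assert (he : 0 < c - th) by lra.
  assert (Habar := abarM_ge b c th hb (conj hc1 hc2) Hbc).
  assert (Hsym : forall a, 0 < a -> zeta a b c th < 0 -> a <= 2 * b ^ 2 / (c - th) ->
            symmetric_mixed_equilibrium a b c th (sym_dist a b c th)).
  { intros a ha hz Ha. apply Rle_div_iff in Ha; [|lra].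
    apply zeta_neg_iff in hz; [|lra]. apply sym_dist_equilibrium; lra. }
  assert (Hzero : forall a, 0 < a -> a <= abarM b c th -> a >= 2 * b ^ 2 / (c - th) ->
            symmetric_mixed_equilibrium a b c th (zero_dist a b c th)).
  { intros a ha HaM Ha. apply Rge_le, Rdiv_le_iff in Ha; [|lra].
    apply zero_dist_equilibrium; lra. }
  split; [lra|split].
  - intros a ha hz HaM. split; [|split; [apply Hsym|apply Hzero]; auto].
    destruct (Rle_lt_dec a (2 * b ^ 2 / (c - th))).
    + exists (sym_dist a b c th), (sym_dist a b c th). apply Hsym; auto.
    + exists (zero_dist a b c th), (zero_dist a b c th). apply Hzero; lra.
  - set (a := 2 * b ^ 2 / (c - th)).
    assert (ha : 0 < a) by (apply Rdiv_lt_0_compat; [apply Rmult_lt_0_compat, pow_lt|]; lra).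
    assert (hz : zeta a b c th < 0).
    { apply zeta_neg_iff; [exact ha|].
      replace (a * (c - th)) with (2 * b ^ 2) by (unfold a; field; lra).
      assert (0 < b ^ 2) by (apply pow_lt; lra). lra. }
    exists a; split; [exact ha|split; [exact hz|]].
    exists (sym_dist a b c th), (sym_dist a b c th). exact (Hsym a ha hz (Rle_refl a)).
Qed.
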